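(* Let $G=(V,E)$ be a graph with a string representation $\varphi$ in the plane. Let $\pi_1$ and $\pi_2$ be two internally disjoint curves with endpoints $a$ and $b$, let $F$ be the closed face of $\mathbb{R}^2\setminus(\pi_1\cup\pi_2)$ containing the string of the vertex occupied by the robber, and let $D$ be the connected component of $G_F$ containing the robber's vertex. If $\pi_1$ and $\pi_2$ are shortest curves relative to $D$, each guarded by five cops, then the robber is confined to $D$.
   Context: A string representation assigns to each vertex $v$ a bounded curve $\varphi(v)\subseteq\mathbb{R}^2$ with distinct $u,v$ adjacent iff $\varphi(u)\cap\varphi(v)\ne\emptyset$. A face of $\mathbb{R}^2\setminus X$ is an arc-connected component, a closed face its closure. For $X\subseteq\mathbb{R}^2$, a vertex $v$ is contained in $X$ if $\varphi(v)\subseteq\mathrm{int}(X)$, and $G_X$ is the subgraph induced by vertices contained in $X$. A path $P$ is a shortest path relative to $D\subseteq V$ if it is shortest in $G[P\cup D]$. For such $P$ from $u$ to $v$ and points $A\in\varphi(u)$, $B\in\varphi(v)$, a curve $\pi\subseteq\bigcup_{p\in P}\varphi(p)$ from $A$ to $B$ whose intersection with each $\varphi(p)$ is connected, these intersections occurring along $\pi$ in the order of $P$, is a shortest curve of $P$ relative to $D$; a shortest curve relative to $D$ is one for some shortest path relative to $D$. Guarding a shortest curve $\pi$ means guarding $N[P]$ for the corresponding path $P$, i.e. the cops' strategy ensures the robber is immediately captured upon moving to any vertex of $N[P]$. The robber is confined to $D$ if he is immediately captured upon moving to any vertex outside $D$. (Game: cops and robber alternate, each staying or moving along an edge; capture when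 a cop is on the robber's vertex.) *)

From HB Require Import structures.
From mathcomp Require Import all_boot all_order all_algebra.
From mathcomp Require Import all_classical all_reals all_analysis.
From Stdlib Require Import Relations.
Set Implicit Arguments. Unset Strict Implicit. Unset Printing Implicit Defensive.
Import Order.TTheory GRing.Theory Num.Theory.
Import numFieldNormedType.Exports.
Local Open Scope classical_set_scope.
Local Open Scope ring_scope.

Notation I01 := (`[0%R, 1%R]%classic).


Definition curve_from {R : realType} (C : set (R * R)) (A B : R * R) : Prop :=
  exists f : R -> R * R, {within I01, continuous f} /\
    f @` I01 = C /\ f 0%R = A /\ f 1%R = B.

Definition is_curve {R : realType} (C : set (R * R)) : Prop :=
  exists A B, curve_from C A B.

Definition arc_joined {R : realType} (Y : set (R * R)) (x y : R * R) : Prop :=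
  exists f : R -> R * R, {within I01, continuous f} /\
    f 0%R = x /\ f 1%R = y /\ f @` I01 `<=` Y.

Definition is_face {R : realType} (X Phi : set (R * R)) : Prop :=
  exists x, ~ X x /\ Phi = [set y | arc_joined (~` X) x y].

Definition is_closed_face {R : realType} (X F : set (R * R)) : Prop :=
  exists Phi, is_face X Phi /\ F = closure Phi.

Definition string_rep {R : realType} {T : finType} (adj : rel T)
    (phi : T -> set (R * R)) : Prop :=
  (forall v, is_curve (phi v)) /\
  (forall u v, u <> v -> (adj u v <-> phi u `&` phi v !=set0)).

Definition contained {R : realType} {T : finType} (phi : T -> set (R * R))
    (X : set (R * R)) (v : T) : Prop :=
  phi v `<=` interior X.

(** The connected component of G_X containing r0 (vertex set). *)
Definition component {R : realType} {T : finType} (adj : rel T)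
    (phi : T -> set (R * R)) (X : set (R * R)) (r0 : T) : T -> Prop :=
  fun x => contained phi X r0 /\
    clos_refl_trans T
      (fun y z => adj y z /\ contained phi X y /\ contained phi X z) r0 x.

Definition walk_in {T : finType} (adj : rel T) (S : T -> Prop) (u v : T)
    (p : seq T) : Prop :=
  exists s, p = u :: s /\ path adj u s /\ last u s = v /\
    (forall x, x \in p -> S x).

Definition shortest_rel {T : finType} (adj : rel T) (D : T -> Prop)
    (P : seq T) (u v : T) : Prop :=
  walk_in adj (fun x => x \in P \/ D x) u v P /\
  forall Q, walk_in adj (fun x => x \in P \/ D x) u v Q -> (size P <= size Q)%N.

Definition shortest_curve_of {R : realType} {T : finType} (adj : rel T)
    (phi : T -> set (R * R)) (D : T -> Prop) (P : seq T)
    (pi : set (R * R)) (A B : R * R) : Prop :=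
  exists u v, shortest_rel adj D P u v /\ phi u A /\ phi v B /\
  exists f : R -> R * R, {within I01, continuous f} /\
    f @` I01 = pi /\ f 0%R = A /\ f 1%R = B /\
    (forall z, pi z -> exists p, p \in P /\ phi p z) /\
    (forall p, p \in P -> connected (pi `&` phi p)) /\
    (* the intersections occur along pi in the order of P *)
    (forall i j, (i < j < size P)%N ->
       (forall s, I01 s -> phi (nth u P j) (f s) ->
          exists s0, I01 s0 /\ phi (nth u P i) (f s0) /\ s0 <= s) /\
       (forall s, I01 s -> phi (nth u P i) (f s) ->
          exists s1, I01 s1 /\ phi (nth u P j) (f s1) /\ s <= s1)).

Definition closed_nbhd {T : finType} (adj : rel T) (P : seq T) (x : T) : Prop :=
  x \in P \/ exists p, p \in P /\ adj p x.

(* Positions at time t: cops c t : {ffun 'I_k -> T}, robber r t.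
   Round t: the cops move (c t -> c t.+1, according to the strategy sigma
   applied to the history), then the robber moves (r t -> r t.+1).
   Time 0 is the current moment of the game. *)

Definition history {T : finType} {k : nat} (c : nat -> {ffun 'I_k -> T})
    (r : nat -> T) (t : nat) : seq ({ffun 'I_k -> T} * T) :=
  [seq (c i, r i) | i <- iota 0 t.+1].

Definition consistent {T : finType} {k : nat} (adj : rel T)
    (sigma : seq ({ffun 'I_k -> T} * T) -> {ffun 'I_k -> T})
    (c0 : {ffun 'I_k -> T}) (r0 : T)
    (c : nat -> {ffun 'I_k -> T}) (r : nat -> T) : Prop :=
  c 0%N = c0 /\ r 0%N = r0 /\
  forall t, c t.+1 = sigma (history c r t) /\
    (forall i, c t.+1 i = c t i \/ adj (c t i) (c t.+1 i)) /\
    (r t.+1 = r t \/ adj (r t) (r t.+1)).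

(** No capture has happened up to (and including) the cops' move of round t. *)
Definition free {T : finType} {k : nat} (c : nat -> {ffun 'I_k -> T})
    (r : nat -> T) (t : nat) : Prop :=
  forall s, (s <= t)%N -> forall i, c s i <> r s /\ c s.+1 i <> r s.

(** The robber, having moved to r t.+1 in round t, is captured immediately
    (by a cop of C): either he stepped onto that cop, or that cop catches him
    at the cops' next move. *)
Definition imm_captured {T : finType} {k : nat} (C : {set 'I_k})
    (c : nat -> {ffun 'I_k -> T}) (r : nat -> T) (t : nat) : Prop :=
  exists i, i \in C /\ (c t.+1 i = r t.+1 \/ c t.+2 i = r t.+1).

Definition guards {T : finType} {k : nat} (adj : rel T)
    (sigma : seq ({ffun 'I_k -> T} * T) -> {ffun 'I_k -> T})
    (c0 : {ffun 'I_k -> T}) (r0 : T) (C : {set 'I_k}) (S : T -> Prop) : Prop :=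
  forall c r, consistent adj sigma c0 r0 c r ->
  forall t, free c r t -> r t.+1 <> r t -> S (r t.+1) -> imm_captured C c r t.

Definition confined {T : finType} {k : nat} (adj : rel T)
    (sigma : seq ({ffun 'I_k -> T} * T) -> {ffun 'I_k -> T})
    (c0 : {ffun 'I_k -> T}) (r0 : T) (D : T -> Prop) : Prop :=
  forall c r, consistent adj sigma c0 r0 c r ->
  forall t, free c r t -> ~ D (r t.+1) -> imm_captured [set: 'I_k] c r t.

From Pilot Require Import Defs.
From HB Require Import structures.
From mathcomp Require Import all_boot all_order all_algebra.
From mathcomp Require Import all_classical all_reals all_analysis.
Import Order.TTheory GRing.Theory Num.Theory.
Import numFieldNormedType.Exports.
Local Open Scope classical_set_scope.
Local Open Scope ring_scope.

From mathcomp Require Import lra.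
From Stdlib Require Import Relation_Operators.
Set Implicit Arguments. Unset Strict Implicit. Unset Printing Implicit Defensive.

(* If the robber leaves D, he steps from a vertex y of D to a neighbour x that
   is not contained in F.  The string of x meets the string of y, which lies in
   the interior of F, and is connected; a point of the closure of a face that is
   off pi1 u pi2 is interior to it, so the string of x must meet pi1 u pi2.
   Every point of pi_i lies on the string of a vertex of P_i, hence x is in
   N[P1] or N[P2], where the guarding cops capture the robber at once. *)

Lemma continuous_within_comp {T U V : topologicalType} (A : set T) (B : set U)
    (m : T -> U) (f : U -> V) :
  continuous m -> (forall t, A t -> B (m t)) ->
  {within B, continuous f} -> {within A, continuous (f \o m)}.
Proof.
move=> cm mAB /subspace_continuousP cf; apply/subspace_continuousP => x Ax W.
move=> /(cf _ (mAB _ Ax)) /(cm x).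
rewrite nbhs_simpl /= /within; apply: filterS => t BW At; exact/BW/mAB.
Qed.

Lemma ball_segment {R : realFieldType} (V : normedModType R) (z w u : V) e s :
  ball z e w -> ball z e u -> 0 <= s <= 1 -> ball z e (w + s *: (u - w)).
Proof.
rewrite -!ball_normE /= => zw zu /andP[s0 s1].
have -> : z - (w + s *: (u - w)) = (1 - s) *: (z - w) + s *: (z - u).
  by rewrite scalerBl scale1r !scalerBr opprB -addrA subrKA opprD opprB addrA.
rewrite (le_lt_trans (ler_normD _ _)) // !normrZ ger0_norm ?subr_ge0 // ger0_norm //.
have [a0 b0] := (normr_ge0 (z - w), normr_ge0 (z - u)).
by case: (lerP s (1/2)) => hs; nra.
Qed.

Section PlaneTopology.
Variable R : realType.

Lemma I01P (s : R) : I01 s <-> 0 <= s <= 1.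
Proof. by rewrite /= in_itv. Qed.

Lemma arc_joined_extend (Y : set (R * R)) x w u :
  arc_joined Y x w -> (forall s : R, 0 <= s <= 1 -> Y (w + s *: (u - w))) ->
  arc_joined Y x u.
Proof.
case=> f [cf [f0 [f1 fY]]] wuY.
pose m : R -> R := (fun t => 2 * t) \min cst 1.
pose n : R -> R := (fun t => 2 * t - 1) \max cst 0.
have cm : continuous m.
  by apply: min_fun_continuous; [exact: mulrl_continuous | exact: cst_continuous].
have cn : continuous n.
  apply: max_fun_continuous; last exact: cst_continuous.
  by move=> t; apply: cvgB; [exact: mulrl_continuous | exact: cvg_cst].
exists (fun t => f (m t) + n t *: (u - w)); split; [|split; [|split]].
- move=> t; apply: cvgD.
    apply: (continuous_within_comp cm _ cf) => s /I01P s01; apply/I01P.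
    rewrite /m /=; apply/andP; split; [rewrite le_min | rewrite ge_min]; lra.
  by apply: continuous_subspaceT => s; apply: cvgZ; [exact: cn | exact: cvg_cst].
- by rewrite /m /n /= mulr0 add0r min_l ?ler01 // max_r ?lerN10 // scale0r addr0.
- rewrite /m /n /= mulr1 min_r ?ler1n // (_ : 2 - 1 = 1); last lra.
  by rewrite max_l ?ler01 // scale1r f1 addrC subrK.
- move=> _ [t /I01P t01 <-]; rewrite /m /n /=.
  have [t_le|t_gt] := lerP (2 * t) 1.
    rewrite max_r ?subr_le0 // scale0r addr0; apply: fY.
    by exists (2 * t) => //; apply/I01P; lra.
  rewrite max_l ?subr_ge0 ?ltW // f1; apply: wuY; lra.
Qed.

Lemma closure_face_interior (X Phi : set (R * R)) z :
  closed X -> is_face X Phi -> closure Phi z -> ~ X z -> (closure Phi)° z.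
Proof.
move=> cX [x0 [_ ->]] Phi_z nXz.
have /nbhs_ballP [e /= e0 zeX] : nbhs z (~` X).
  by move: nXz; apply: (closed_openC cX).
have [w [x0w zew]] := Phi_z _ (nbhsx_ballx z _ e0).
apply/nbhs_ballP; exists e => //= u zeu; apply: subset_closure.
by apply: (arc_joined_extend x0w) => s s01; apply/zeX/ball_segment.
Qed.

Lemma connected_meets_closed_face_boundary (X F S : set (R * R)) :
  closed X -> is_closed_face X F -> connected S ->
  S `&` F° !=set0 -> ~ S `<=` F° -> S `&` X !=set0.
Proof.
move=> cX [Phi [facePhi ->]] cS SF nSF; apply: contrapT => SX0; apply: nSF.
suff <- : S `&` (closure Phi)° = S by move=> s [].
(* As S avoids X, S `&` F° is closed in S by closure_face_interior. *)
apply: cS => //; first by exists (closure Phi)°; [exact: open_interior |].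
exists (closure Phi); first exact: closed_closure.
apply/seteqP; split=> s [Ss Fs]; split=> //; first exact: interior_subset.
by apply: (closure_face_interior cX facePhi) => // Xs; apply: SX0; exists s.
Qed.

Lemma curve_from_compact (C : set (R * R)) A B : curve_from C A B -> compact C.
Proof.
by case=> f [cf [<- _]]; apply: continuous_compact cf _; exact: segment_compact.
Qed.

Lemma curve_from_closed (C : set (R * R)) A B : curve_from C A B -> closed C.
Proof. by move/curve_from_compact; apply: compact_closed; exact: norm_hausdorff. Qed.

Lemma is_curve_connected (C : set (R * R)) : is_curve C -> connected C.
Proof.
case=> A [B [f [cf [<- _]]]].
by apply: connected_continuous_connected cf; exact: segment_connected.
Qed.

End PlaneTopology.

Section StringGraph.
Variables (R : realType) (T : finType) (adj : rel T) (phi : T -> set (R * R)).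

Lemma component_contained X r0 v : component adj phi X r0 v -> contained phi X v.
Proof.
by case=> + r0v; elim: r0v => [y z [_ []] | | y w z _ IHy _ IHz /IHy/IHz].
Qed.

Lemma component_exit_not_contained X r0 y x :
  component adj phi X r0 y -> adj y x -> ~ component adj phi X r0 x ->
  ~ contained phi X x.
Proof.
move=> [r0X r0y] yx nDx Xx; apply: nDx; split=> //.
apply: (rt_trans _ _ _ _ _ r0y); apply: rt_step; do !split=> //.
exact: (component_contained (conj r0X r0y)).
Qed.

Lemma closed_nbhd_of_string_meets (X : set (R * R)) (P : seq T) x :
  string_rep adj phi -> (forall z, X z -> exists p, p \in P /\ phi p z) ->
  phi x `&` X !=set0 -> closed_nbhd adj P x.
Proof.
move=> [_ meet_adj] XP [z [xz /XP [p [pP pz]]]].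
have [<-|/eqP px] := eqVneq p x; first by left.
by right; exists p; split=> //; apply/(meet_adj _ _ px); exists z.
Qed.

Lemma component_exit_meets_face_boundary X F r0 y x :
  string_rep adj phi -> closed X -> is_closed_face X F ->
  component adj phi F r0 y -> adj y x -> ~ component adj phi F r0 x ->
  phi x `&` X !=set0.
Proof.
move=> [curves meet_adj] cX faceF Dy yx nDx.
have yx_neq : y <> x by move=> eyx; apply: nDx; rewrite -eyx.
have [q [yq xq]] : phi y `&` phi x !=set0 by apply/(meet_adj _ _ yx_neq).
apply: connected_meets_closed_face_boundary cX faceF _ _ _.
- exact/is_curve_connected/curves.
- by exists q; split=> //; apply: (component_contained Dy).
- exact: component_exit_not_contained Dy yx nDx.
Qed.

Variable D : T -> Prop.

Lemma shortest_curve_from P pi a b :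
  shortest_curve_of adj phi D P pi a b -> curve_from pi a b.
Proof. by case=> u [v [_ [_ [_ [f [cf [fpi [fa [fb _]]]]]]]]]; exists f. Qed.

Lemma shortest_curve_cover P pi a b :
  shortest_curve_of adj phi D P pi a b ->
  forall z, pi z -> exists p, p \in P /\ phi p z.
Proof. by case=> u [v [_ [_ [_ [f [_ [_ [_ [_ [cover _]]]]]]]]]]. Qed.

End StringGraph.

Section Game.
Variables (T : finType) (k : nat) (adj : rel T).
Variables (sigma : seq ({ffun 'I_k -> T} * T) -> {ffun 'I_k -> T}).
Variables (c0 : {ffun 'I_k -> T}) (r0 : T).
Implicit Types (c : nat -> {ffun 'I_k -> T}) (r : nat -> T) (S : T -> Prop).

Lemma imm_capturedS (C C' : {set 'I_k}) c r t :
  C \subset C' -> imm_captured C c r t -> imm_captured C' c r t.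
Proof. by move=> /fintype.subsetP CC' [i [iC cap]]; exists i; split=> //; exact: CC'. Qed.

Lemma guardsU C1 C2 S1 S2 :
  guards adj sigma c0 r0 C1 S1 -> guards adj sigma c0 r0 C2 S2 ->
  guards adj sigma c0 r0 (C1 :|: C2) (S1 `|` S2).
Proof.
move=> g1 g2 c r play t fr moved [S1r|S2r].
- by apply: imm_capturedS (g1 c r play t fr moved S1r); exact: finset.subsetUl.
- by apply: imm_capturedS (g2 c r play t fr moved S2r); exact: finset.subsetUr.
Qed.

Lemma free_le c r s t : (s <= t)%N -> Defs.free c r t -> Defs.free c r s.
Proof. by move=> st fr u us; apply: fr; exact: leq_trans st. Qed.

Lemma free_not_captured C c r t : Defs.free c r t.+1 -> ~ imm_captured C c r t.
Proof. by move=> fr [i [_ [cap|cap]]]; have [] := fr t.+1 (leqnn _) i. Qed.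

Lemma guards_confined C S D :
  D r0 -> (forall y x, D y -> adj y x -> ~ D x -> S x) ->
  guards adj sigma c0 r0 C S -> confined adj sigma c0 r0 D.
Proof.
move=> Dr0 exitS gS c r play.
have [_ [r_0 step]] := play.
have exit_captured t : Defs.free c r t -> D (r t) -> ~ D (r t.+1) ->
    imm_captured [set: 'I_k] c r t.
  move=> fr Drt nDrt1.
  have moved : r t.+1 <> r t by move=> e; apply: nDrt1; rewrite e.
  have [_ [_ [//|rt_rt1]]] := step t.
  by apply: imm_capturedS (gS c r play t fr moved (exitS _ _ Drt rt_rt1 nDrt1)).
have stays t : Defs.free c r t -> D (r t).
  elim: t => [|t IHt] fr; first by rewrite r_0.
  have fr_t := free_le (leqnSn t) fr.
  apply: contrapT => nD; apply: (free_not_captured fr).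
  exact: exit_captured fr_t (IHt fr_t) nD.
by move=> t fr; apply: exit_captured fr (stays t fr).
Qed.

End Game.

Theorem lemma8 (R : realType) (T : finType) (adj : rel T)
  (phi : T -> set (R * R)) (k : nat)
  (sigma : seq ({ffun 'I_k -> T} * T) -> {ffun 'I_k -> T})
  (c0 : {ffun 'I_k -> T}) (r0 : T)
  (pi1 pi2 : set (R * R)) (a b : R * R) (F : set (R * R))
  (P1 P2 : seq T) (C1 C2 : {set 'I_k}) :
  symmetric adj -> irreflexive adj -> string_rep adj phi ->
  pi1 `&` pi2 `<=` [set a; b] ->
  is_closed_face (pi1 `|` pi2) F ->
  phi r0 `<=` F -> contained phi F r0 ->
  shortest_curve_of adj phi (component adj phi F r0) P1 pi1 a b ->
  shortest_curve_of adj phi (component adj phi F r0) P2 pi2 a b ->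
  #|C1| = 5%N -> #|C2| = 5%N ->
  guards adj sigma c0 r0 C1 (closed_nbhd adj P1) ->
  guards adj sigma c0 r0 C2 (closed_nbhd adj P2) ->
  confined adj sigma c0 r0 (component adj phi F r0).
Proof.
move=> _ _ srep _ faceF _ r0F sc1 sc2 _ _ g1 g2.
have closed_pi12 : closed (pi1 `|` pi2).
  by apply: closedU; [move: sc1 | move: sc2] => /shortest_curve_from/curve_from_closed.
apply: guards_confined (guardsU g1 g2); first by split=> //; exact: rt_refl.
move=> y x Dy yx nDx.
have [z [xz [pi1z|pi2z]]] :=
  component_exit_meets_face_boundary srep closed_pi12 faceF Dy yx nDx.
- by left; apply: closed_nbhd_of_string_meets srep (shortest_curve_cover sc1) _; exists z.
- by right; apply: closed_nbhd_of_string_meets srep (shortest_curve_cover sc2) _; exists z.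
Qed.
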